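(* Let $p\in(0,1)$. For $n\ge1$ let $D_n$ be the random subset of an $n\times n$ square of $\mathbb{Z}^2$ obtained by keeping each vertex independently with probability $p$. Then there exists a constant $\alpha_p>0$ such that $\mathbb{E}\left[\ell_{\mathrm{TS}}(D_n)\right]/n^2\to\alpha_p$ as $n\to\infty$.
   Context: For a finite set $V\subseteq\mathbb{Z}^2$, $\ell_{\mathrm{TS}}(V)$ is the length of a shortest path in the standard Cayley graph of $\mathbb{Z}^2$ (generators $e_1,e_2$) visiting every point of $V$, with starting and ending points not prescribed ($\ell_{\mathrm{TS}}(\emptyset)=0$). *)

From HB Require Import structures.
From mathcomp Require Import all_boot all_order all_algebra.
From mathcomp Require Import all_classical all_reals all_analysis.
Set Implicit Arguments. Unset Strict Implicit. Unset Printing Implicit Defensive.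
Import Order.TTheory GRing.Theory Num.Theory.
Local Open Scope classical_set_scope.
Local Open Scope ring_scope.

Definition Z2 := (int * int)%type.

Definition Z2adj (z w : Z2) : bool :=
  ((`|z.1 - w.1|%N + `|z.2 - w.2|%N)%N == 1%N).

Definition is_Z2path (s : seq Z2) : bool := sorted Z2adj s.
Definition Z2path_length (s : seq Z2) : nat := (size s).-1.

(* l_TS(V): length of a shortest path visiting every point of V
   (endpoints not prescribed).  For V empty this is 0 (empty/one-point path). *)
Definition lTS {R : realType} (V : set Z2) : R :=
  inf [set (Z2path_length s)%:R | s in [set s : seq Z2 |
         is_Z2path s /\ (forall v, V v -> v \in s)]].

Definition sq_emb (n : nat) (x : 'I_n * 'I_n) : Z2 := ((x.1 : nat)%:Z, (x.2 : nat)%:Z).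

Definition sq_set (n : nat) (A : {set 'I_n * 'I_n}) : set Z2 :=
  [set z | exists2 x, x \in A & z = sq_emb x].

(* Probability that the site-percolation random set D_n (each vertex kept
   independently with probability p) equals A. *)
Definition perc_prob {R : realType} (p : R) (n : nat) (A : {set 'I_n * 'I_n}) : R :=
  p ^+ #|A| * (1 - p) ^+ (n * n - #|A|)%N.

Definition E_lTS {R : realType} (p : R) (n : nat) : R :=
  \sum_(A : {set 'I_n * 'I_n}) perc_prob p A * lTS (sq_set A).

(* Cut the (K+1)m-square into (K+1)^2 blocks of side m and join optimal tours
   of the sites kept in each block, block by block along a row and then row by
   row.  The joins cost at most 6 (K+1)^2 m steps, and the sites kept in a
   block are distributed as D_m, so
     E l(D_{(K+1)m}) <= (K+1)^2 (E l(D_m) + 6 m).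
   With the monotonicity of n |-> E l(D_n), this near-subadditivity forces
   E l(D_n) / n^2 to converge, Fekete-style, to inf_m (E l(D_m) / m^2 + 6 / m).
   The limit is at least p: a tour visits all |D_n| sites, so
   E l(D_n) >= p n^2 - 1. *)

From HB Require Import structures.
From mathcomp Require Import all_boot all_order all_algebra.
From mathcomp Require Import all_classical all_reals all_analysis.
From mathcomp Require Import zify ring lra.
Import Order.TTheory GRing.Theory Num.Theory numFieldNormedType.Exports.
Set Implicit Arguments. Unset Strict Implicit. Unset Printing Implicit Defensive.
Local Open Scope classical_set_scope.
Local Open Scope ring_scope.

Definition l1_dist (a b : Z2) : nat := (`|a.1 - b.1| + `|a.2 - b.2|)%N.

Lemma Z2adj_sym : symmetric Z2adj.
Proof. by move=> a b; rewrite /Z2adj; apply/idP/idP => /eqP H; apply/eqP; lia. Qed.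

Lemma l1_dist_step (a b : Z2) (d : nat) :
  l1_dist a b = d.+1 -> exists2 a', Z2adj a a' & l1_dist a' b = d.
Proof.
case: a b => [x y] [u v]; rewrite /l1_dist /Z2adj /= => H.
have [xu|ux] := ltrP x u; first by exists (x + 1, y) => /=; [apply/eqP|]; lia.
have [{}ux|xu] := ltrP u x; first by exists (x - 1, y) => /=; [apply/eqP|]; lia.
have [yv|vy] := ltrP y v; first by exists (x, y + 1) => /=; [apply/eqP|]; lia.
by exists (x, y - 1) => /=; [apply/eqP|]; lia.
Qed.

Lemma Z2path_connect (a b : Z2) :
  exists s, [/\ path Z2adj a s, last a s = b & size s = l1_dist a b].
Proof.
move: {2}(l1_dist a b) (erefl (l1_dist a b)) => d.
elim: d a => [|d IH] a Hd.
  exists [::]; split => //=.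
  by move: Hd; case: a b => [x y] [u v]; rewrite /l1_dist /= => H; congr pair; lia.
have [a' aa' a'b] := l1_dist_step Hd.
have [s [s_path s_last s_size]] := IH a' a'b.
by exists (a' :: s); rewrite /= aa' s_path s_last s_size a'b Hd.
Qed.

Lemma path_join x s y t : path Z2adj x s -> path Z2adj y t ->
  exists u, [/\ path Z2adj x u, last x u = last y t,
    {subset x :: s <= x :: u}, {subset y :: t <= x :: u} &
    size u = (size s + l1_dist (last x s) y + size t)%N].
Proof.
move=> s_path t_path.
have [c [c_path c_last c_size]] := Z2path_connect (last x s) y.
have y_in : y \in x :: s ++ c.
  rewrite -cat_cons mem_cat -c_last; have := mem_last (last x s) c.
  by rewrite in_cons => /orP[/eqP ->|->]; rewrite ?mem_last ?orbT.
exists (s ++ c ++ t); split.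
- by rewrite cat_path s_path /= cat_path c_path c_last t_path.
- by rewrite !last_cat c_last.
- by move=> v; rewrite -cat_cons mem_cat => ->.
- move=> v; rewrite in_cons => /orP[/eqP -> | v_t].
    by move: y_in; rewrite !(in_cons, mem_cat) => /or3P[] ->; rewrite ?orbT.
  by rewrite !(in_cons, mem_cat) v_t !orbT.
- by rewrite !size_cat c_size addnA.
Qed.

Lemma path_chain (q : nat -> Z2 * seq Z2) (B N : nat) :
  (forall j, path Z2adj (q j).1 (q j).2) ->
  (forall j, (j < N)%N -> (l1_dist (last (q j).1 (q j).2) (q j.+1).1 <= B)%N) ->
  exists u, [/\ path Z2adj (q 0%N).1 u, last (q 0%N).1 u = last (q N).1 (q N).2,
    forall j, (j <= N)%N -> {subset (q j).1 :: (q j).2 <= (q 0%N).1 :: u} &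
    (size u <= \sum_(j < N.+1) size (q j).2 + N * B)%N].
Proof.
move=> q_path q_gap; elim: N q_gap => [|N IH] q_gap.
  exists (q 0%N).2; split => //; first by move=> j; rewrite leqn0 => /eqP ->.
  by rewrite big_ord1 mul0n addn0.
have [u [u_path u_last u_sub u_size]] := IH (fun j hj => q_gap j (ltnW hj)).
have [w [w_path w_last sub_uw sub_qw w_size]] := path_join u_path (q_path N.+1).
exists w; split => //.
  move=> j; rewrite leq_eqVlt => /orP[/eqP -> // | jN] v v_in.
  exact/sub_uw/(u_sub j jN).
rewrite w_size big_ord_recr /= u_last mulSn.
have := q_gap N (ltnSn N); move: u_size.
by move: (N * B)%N (\sum_(j < N.+1) size (q j).2)%N => NB S; lia.
Qed.

Definition tour (V : set Z2) (s : seq Z2) : Prop :=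
  is_Z2path s /\ (forall v, V v -> v \in s).

Definition optimal_tour (V : set Z2) (s : seq Z2) : Prop :=
  tour V s /\ forall s', tour V s' -> (Z2path_length s <= Z2path_length s')%N.

Lemma tour_subset V W s : V `<=` W -> tour W s -> tour V s.
Proof. by move=> VW [s_path s_cov]; split => // v /VW; apply: s_cov. Qed.

Lemma tour_seq (l : seq Z2) : exists s, tour [set v | v \in l] s.
Proof.
elim: l => [|a l [[|y t] [s_path s_cov]]]; first by exists [::].
  exists [:: a]; split => // v /=.
  by rewrite in_cons => /orP[/eqP ->|/s_cov //]; apply: mem_head.
have [u [u_path _ _ sub_u _]] :=
  path_join (x := a) (s := [::]) isT (s_path : path Z2adj y t).
exists (a :: u); split => // v /=; rewrite in_cons => /orP[/eqP ->|/s_cov /sub_u //].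
exact: mem_head.
Qed.

Lemma tour_sq_set n (A : {set 'I_n * 'I_n}) : exists s, tour (sq_set A) s.
Proof.
have [s s_tour] := tour_seq (map (@sq_emb n) (enum A)).
by exists s; apply: tour_subset s_tour => _ [x xA ->] /=; rewrite map_f ?mem_enum.
Qed.

Lemma optimal_tour_head V x t : (exists v, V v) -> optimal_tour V (x :: t) -> V x.
Proof.
move=> [v Vv] [[xt_path xt_cov] xt_min]; apply: contrapT => Vx.
have t_tour : tour V t.
  split; first exact: path_sorted xt_path.
  by move=> w Vw; move: (xt_cov w Vw); rewrite in_cons => /orP[/eqP wx|//]; subst.
have := xt_min t t_tour; rewrite /Z2path_length /=.
by case: t {xt_path xt_cov xt_min} t_tour => [[_ /(_ v Vv)] //|y t' _ /=]; lia.
Qed.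

Lemma tour_rev V s : tour V s -> tour V (rev s).
Proof.
move=> [s_path s_cov]; split; last by move=> v Vv; rewrite mem_rev s_cov.
rewrite /is_Z2path rev_sorted (_ : (fun z w => _) = Z2adj) //.
by do 2!apply/funext=> ?; apply: Z2adj_sym.
Qed.

Lemma optimal_tour_last V x t : (exists v, V v) -> optimal_tour V (x :: t) ->
  V (last x t).
Proof.
move=> V_ne [xt_tour xt_min].
have rev_xt : rev (x :: t) = last x t :: rev (belast x t) by rewrite lastI rev_rcons.
apply: (optimal_tour_head (t := rev (belast x t)) V_ne).
rewrite -rev_xt; split; first exact: tour_rev.
by move=> s' /xt_min; rewrite /Z2path_length size_rev.
Qed.

Section TravellingSalesman.
Variable R : realType.

Lemma lTS_le_tour V s : tour V s -> lTS V <= (Z2path_length s)%:R :> R.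
Proof.
by move=> s_tour; apply: ge_inf; [exists 0 => _ [? _ <-]; apply: ler0n | exists s].
Qed.

Lemma lTS_optimal V : (exists s, tour V s) ->
  exists s, optimal_tour V s /\ lTS V = (Z2path_length s)%:R :> R.
Proof.
move=> V_tour.
have ex_len : exists n, `[< exists2 s, tour V s & Z2path_length s = n >].
  by case: V_tour => s s_tour; exists (Z2path_length s); apply/asboolP; exists s.
case: (ex_minnP ex_len) => n /asboolP [s s_tour <-] s_min.
have {}s_min s' : tour V s' -> (Z2path_length s <= Z2path_length s')%N.
  by move=> s'_tour; apply: s_min; apply/asboolP; exists s'.
exists s; split=> //; apply/le_anti; rewrite lTS_le_tour //=.
apply: lb_le_inf; first by exists (Z2path_length s)%:R, s.
by move=> _ [s' /s_min s's <-]; rewrite ler_nat.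
Qed.

Lemma lTS_ge0 V : (exists s, tour V s) -> 0 <= lTS V :> R.
Proof. by move=> /lTS_optimal [s [_ ->]]. Qed.

Lemma lTS_subset V W : V `<=` W -> (exists s, tour W s) -> lTS V <= lTS W :> R.
Proof.
by move=> VW /lTS_optimal [s [[s_tour _] ->]]; apply/lTS_le_tour/(tour_subset VW).
Qed.

End TravellingSalesman.

Definition translate (t z : Z2) : Z2 := (z.1 + t.1, z.2 + t.2).

Lemma translateK t : cancel (translate t) (translate (- t.1, - t.2)).
Proof. by case=> x y; rewrite /translate /= !addrK. Qed.

Lemma tour_translate t V s : tour V s -> tour (translate t @` V) (map (translate t) s).
Proof.
move=> [s_path s_cov]; split; last by move=> _ [v Vv <-]; rewrite map_f ?s_cov.
rewrite /is_Z2path sorted_map; apply: sub_sorted s_path => a b.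
by rewrite /= /Z2adj /translate /= => /eqP H; apply/eqP; lia.
Qed.

Lemma lTS_translate (R : realType) t V : lTS (translate t @` V) = lTS V :> R.
Proof.
rewrite /lTS; congr inf; apply/seteqP; split => _ [s s_tour <-].
  exists (map (translate (- t.1, - t.2)) s); last by rewrite /Z2path_length size_map.
  apply: tour_subset (tour_translate _ s_tour) => v Vv.
  by exists (translate t v); [exists v | rewrite translateK].
by exists (map (translate t) s); [apply: tour_translate | rewrite /Z2path_length size_map].
Qed.

Lemma sq_emb_inj n : injective (@sq_emb n).
Proof. by move=> [x1 x2] [y1 y2] [/val_inj -> /val_inj ->]. Qed.

Lemma lTS_sq_set_ge_card (R : realType) n (A : {set 'I_n * 'I_n}) :
  #|A|%:R - 1 <= lTS (sq_set A) :> R.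
Proof.
have [s [[[_ s_cov] _] ->]] := lTS_optimal R (tour_sq_set A).
have A_s : (#|A| <= size s)%N.
  rewrite cardE -(size_map (@sq_emb n)); apply: uniq_leq_size.
    by rewrite map_inj_uniq ?enum_uniq //; apply: sq_emb_inj.
  by move=> _ /mapP [x xA ->]; apply: s_cov; exists x; rewrite // -mem_enum.
by rewrite lerBlDr natr1 ler_nat /Z2path_length; lia.
Qed.

Section SubsetWeights.
Variables (R : realType) (p : R) (T : finType).

Definition subset_weight (D A : {set T}) : R := p ^+ #|A| * (1 - p) ^+ (#|D| - #|A|).

Lemma sum_subsets_setU1 (F : {set T} -> R) (x : T) (D : {set T}) : x \notin D ->
  \sum_(A : {set T} | A \subset x |: D) F A =
  \sum_(A : {set T} | A \subset D) (F A + F (x |: A)).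
Proof.
move=> xD; rewrite big_split /= (bigID (fun A : {set T} => x \in A)) /= addrC.
congr (_ + _).
  apply: eq_bigl => A; apply/andP/idP => [[AxD xA]|AD].
    apply/fintype.subsetP => y yA; move: (fintype.subsetP AxD y yA).
    by rewrite !inE => /predU1P[yx|//]; move: xA; rewrite -yx yA.
  split; first by rewrite (fintype.subset_trans AD) ?subsetU1.
  by apply: contra xD; apply: fintype.subsetP.
rewrite (reindex_onto (fun B => x |: B) (fun A => A :\ x)) /=; last first.
  by move=> A /andP[_ xA]; rewrite finset.setD1K.
apply: eq_bigl => B; rewrite setU11 andbT; apply/andP/idP => [[BxD /eqP <-]|BD].
  apply/fintype.subsetP => y; rewrite !inE => /andP[/negbTE yx]; rewrite yx /= => yB.
  by have := fintype.subsetP BxD y; rewrite !inE yx yB; apply.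
have xB : x \notin B by apply: contra xD; apply: fintype.subsetP.
by split; [apply: finset.setUS | rewrite setU1K].
Qed.

Lemma sum_subset_weight_restrict (D S : {set T}) (G : {set T} -> R) :
  S \subset D -> (forall A, G A = G (A :&: S)) ->
  \sum_(A : {set T} | A \subset D) subset_weight D A * G A =
  \sum_(B : {set T} | B \subset S) subset_weight S B * G B.
Proof.
move=> SD G_S; move: {2}#|D :\: S| (erefl #|D :\: S|) => k.
elim: k D SD => [|k IH] D SD DS_k.
  suff -> : D = S by [].
  by apply/eqP; rewrite finset.eqEsubset SD andbT -finset.setD_eq0 -cards_eq0 DS_k.
have [x xDS] : exists x, x \in D :\: S by apply/set0Pn; rewrite -card_gt0 DS_k.
move: (xDS); rewrite inE => /andP[xS xD].
have SDx : S \subset D :\ x.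
  apply/fintype.subsetP => y yS; rewrite !inE (fintype.subsetP SD y yS) andbT.
  by apply: contraNneq xS => <-.
rewrite -(IH (D :\ x) SDx); last first.
  apply/succn_inj; rewrite -DS_k (cardsD1 x (D :\: S)) xDS add1n; congr (_.+1).
  by apply: eq_card => y; rewrite !inE; case: (y == x); case: (y \in S); case: (y \in D).
rewrite -[in LHS](finset.setD1K xD) sum_subsets_setU1 ?setD11 //; apply: eq_bigr => A ADx.
have xA : x \notin A by apply/negP => /(fintype.subsetP ADx); rewrite setD11.
have -> : G (x |: A) = G A.
  rewrite G_S [in RHS]G_S; congr G; apply/setP => y; rewrite !inE.
  by case: eqP => [->|]; rewrite ?(negbTE xS) ?andbF.
have A_Dx : (#|A| <= #|D :\ x|)%N by apply: subset_leq_card.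
rewrite finset.setD1K // /subset_weight cardsU1 xA add1n (cardsD1 x D) xD add1n.
rewrite subSS subSn //.
by rewrite !exprS; ring.
Qed.

End SubsetWeights.

Section Percolation.
Variables (R : realType) (p : R).
Hypotheses (p_ge0 : 0 <= p) (p_le1 : p <= 1).

Lemma perc_prob_ge0 n (A : {set 'I_n * 'I_n}) : 0 <= perc_prob p A.
Proof. by rewrite /perc_prob mulr_ge0 // exprn_ge0 // subr_ge0. Qed.

Lemma sum_perc_prob_restrict n (S : {set 'I_n * 'I_n}) (G : {set 'I_n * 'I_n} -> R) :
  (forall A, G A = G (A :&: S)) ->
  \sum_A perc_prob p A * G A =
  \sum_(B : {set _} | B \subset S) subset_weight p S B * G B.
Proof.
move=> G_S; rewrite -(sum_subset_weight_restrict p (finset.subsetT S) G_S).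
apply: eq_big => [A|A _]; first by rewrite finset.subsetT.
by rewrite /subset_weight cardsT card_prod card_ord.
Qed.

Lemma perc_prob_sum1 n : \sum_(A : {set 'I_n * 'I_n}) perc_prob p A = 1.
Proof.
under eq_bigr do rewrite -[perc_prob _ _]mulr1.
rewrite (@sum_perc_prob_restrict _ finset.set0 (fun=> 1)) //.
rewrite (big_pred1 finset.set0) => [|A]; last by rewrite finset.subset0.
by rewrite /subset_weight cards0 !expr0 !mulr1.
Qed.

Lemma perc_prob_mem n (x : 'I_n * 'I_n) :
  \sum_(A : {set 'I_n * 'I_n}) perc_prob p A * (x \in A)%:R = p.
Proof.
rewrite (@sum_perc_prob_restrict _ [set x]%SET) => [|A]; last by rewrite !inE eqxx andbT.
rewrite -[[set x]%SET]finset.setU0 sum_subsets_setU1 ?inE //.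
rewrite (big_pred1 finset.set0) => [|A]; last by rewrite finset.subset0.
by rewrite /subset_weight !inE eqxx cards0 finset.setU0 cards1 subnn /= mulr0 add0r !mulr1.
Qed.

Lemma perc_prob_card n :
  \sum_(A : {set 'I_n * 'I_n}) perc_prob p A * #|A|%:R = p * (n * n)%:R.
Proof.
have card_sum (A : {set 'I_n * 'I_n}) : #|A|%:R = \sum_x ((x \in A)%:R : R).
  by rewrite -sum1_card natr_sum big_mkcond /=; apply: eq_bigr => x _; case: (x \in A).
under eq_bigr do rewrite card_sum mulr_sumr.
rewrite exchange_big /=; under eq_bigr do rewrite perc_prob_mem.
by rewrite sumr_const card_prod card_ord mulr_natr.
Qed.

End Percolation.

Section Blocks.
Variables (K m : nat).

Lemma block_coord_lt (i x : nat) : (x < m)%N -> (i < K)%N -> (x + i * m < K * m)%N.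
Proof. by move=> xm iK; nia. Qed.

Definition block_emb (i l : 'I_K) (x : 'I_m * 'I_m) : 'I_(K * m) * 'I_(K * m) :=
  (Ordinal (block_coord_lt (ltn_ord x.1) (ltn_ord i)),
   Ordinal (block_coord_lt (ltn_ord x.2) (ltn_ord l))).

Lemma block_emb_inj i l : injective (block_emb i l).
Proof. by move=> [x1 x2] [y1 y2] [e1 e2]; congr pair; apply: val_inj => /=; lia. Qed.

Lemma block_emb_translate i l x :
  sq_emb (block_emb i l x) = translate ((i * m)%N%:Z, (l * m)%N%:Z) (sq_emb x).
Proof. by rewrite /sq_emb /translate /= !PoszD. Qed.

Hypothesis m_gt0 : (0 < m)%N.

Definition block (i l : nat) : {set 'I_(K * m) * 'I_(K * m)} :=
  [set x : 'I_(K * m) * 'I_(K * m) | (x.1 %/ m == i)%N && (x.2 %/ m == l)%N].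

Lemma block_imset (i l : 'I_K) : block i l = block_emb i l @: [set: _]%SET.
Proof.
apply/setP => y; rewrite inE; apply/andP/imsetP => [[/eqP e1 /eqP e2]|[x _ ->]] /=.
  exists (Ordinal (ltn_pmod y.1 m_gt0), Ordinal (ltn_pmod y.2 m_gt0)); rewrite ?inE //.
  case: y e1 e2 => y1 y2 /= e1 e2; congr pair; apply: val_inj.
    by rewrite /= addnC -e1 -divn_eq.
  by rewrite /= addnC -e2 -divn_eq.
by rewrite !divnDr ?dvdn_mull // !mulnK // !divn_small.
Qed.

Definition in_box (i l : nat) (z : Z2) : bool :=
  [&& (i * m)%N%:Z <= z.1, z.1 < (i * m + m)%N%:Z,
      (l * m)%N%:Z <= z.2 & z.2 < (l * m + m)%N%:Z].

Lemma sq_set_block_box i l A z : sq_set (A :&: block i l) z -> in_box i l z.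
Proof.
move=> [x]; rewrite !inE => /andP[_ /andP[/eqP x1 /eqP x2]] ->.
have e1 := divn_eq x.1 m; have e2 := divn_eq x.2 m.
have r1 := ltn_pmod x.1 m_gt0; have r2 := ltn_pmod x.2 m_gt0.
rewrite x1 in e1; rewrite x2 in e2.
by rewrite /in_box /sq_emb /= !lez_nat !ltz_nat; apply/and4P; split; lia.
Qed.

Lemma box_corner_in_box i l : in_box i l ((i * m)%N%:Z, (l * m)%N%:Z).
Proof. by rewrite /in_box /= !lexx !ltz_nat; apply/and4P; split => //; lia. Qed.

Lemma l1_dist_box_next_col i l a b :
  in_box i l a -> in_box i l.+1 b -> (l1_dist a b <= 3 * m)%N.
Proof.
rewrite /in_box /l1_dist mulSn !PoszD; case: a b => [a1 a2] [b1 b2] /=.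
by move=> /and4P[? ? ? ?] /and4P[? ? ? ?]; lia.
Qed.

Lemma l1_dist_box_next_row i a b :
  in_box i K a -> in_box i.+1 0 b -> (l1_dist a b <= (K + 3) * m)%N.
Proof.
rewrite /in_box /l1_dist mulSn !PoszD mul0n; case: a b => [a1 a2] [b1 b2] /=.
by move=> /and4P[? ? ? ?] /and4P[? ? ? ?]; nia.
Qed.

End Blocks.

Section BlockTours.
Variables (R : realType) (K m : nat) (A : {set 'I_(K.+1 * m) * 'I_(K.+1 * m)}).
Hypothesis m_gt0 : (0 < m)%N.

Let V (i l : nat) := sq_set (A :&: block K.+1 m i l).

(* A block without sites gets the one-point tour at the corner of its box, so
   that the tours of all blocks can be chained. *)
Definition block_tour (i l : nat) (q : Z2 * seq Z2) : Prop :=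
  [/\ tour (V i l) (q.1 :: q.2), lTS (V i l) = (size q.2)%:R :> R,
      in_box m i l q.1 & in_box m i l (last q.1 q.2)].

Lemma block_tour_exists i l : exists q, block_tour i l q.
Proof.
have V_box := @sq_set_block_box K.+1 m m_gt0 i l A.
case: (pselect (exists v, V i l v)) => [V_ne|V_empty].
  have [[|x t] [[s_tour s_min] s_len]] :=
    lTS_optimal R (tour_sq_set (A :&: block K.+1 m i l)).
    by case: V_ne => v /s_tour.2.
  exists (x, t); split => //; apply: V_box.
    exact: optimal_tour_head V_ne (conj s_tour s_min).
  exact: optimal_tour_last V_ne (conj s_tour s_min).
have any_tour s : is_Z2path s -> tour (V i l) s.
  by split => // v Vv; case: V_empty; exists v.
exists ((i * m)%N%:Z, (l * m)%N%:Z, [::]); split; rewrite ?box_corner_in_box //=.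
  exact: any_tour.
apply/le_anti; rewrite lTS_ge0 ?andbT; last exact: tour_sq_set.
exact: lTS_le_tour (any_tour [::] isT).
Qed.

Section Chaining.
Variable Q : nat -> nat -> Z2 * seq Z2.
Hypothesis Q_tour : forall i l, block_tour i l (Q i l).

Lemma row_path i : exists u, [/\ path Z2adj (Q i 0%N).1 u,
    last (Q i 0%N).1 u = last (Q i K).1 (Q i K).2,
    forall l, (l <= K)%N -> {subset (Q i l).1 :: (Q i l).2 <= (Q i 0%N).1 :: u} &
    (size u <= \sum_(l < K.+1) size (Q i l).2 + K * (3 * m))%N].
Proof.
apply: (path_chain (q := Q i)) => [l | l _]; first by case: (Q_tour i l) => -[].
case: (Q_tour i l) => _ _ _ l_last; case: (Q_tour i l.+1) => _ _ l1_head _.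
exact: l1_dist_box_next_col l_last l1_head.
Qed.

(* Each of the K+1 rows costs K joins of length <= 3m, and the K joins between
   rows have length <= (K+3)m: in all at most 6 (K+1)^2 m extra steps. *)
Lemma lTS_le_block_tours :
  lTS (sq_set A) <=
  (\sum_(i < K.+1) \sum_(l < K.+1) size (Q i l).2 + 6 * K.+1 * K.+1 * m)%N%:R :> R.
Proof.
have [U U_row] := choice row_path.
have [u [u_path _ u_sub u_size]] :
    exists u, [/\ path Z2adj (Q 0%N 0%N).1 u,
      last (Q 0%N 0%N).1 u = last (Q K 0%N).1 (U K),
      forall i, (i <= K)%N -> {subset (Q i 0%N).1 :: U i <= (Q 0%N 0%N).1 :: u} &
      (size u <= \sum_(i < K.+1) size (U i) + K * ((K + 3) * m))%N].
  apply: (path_chain (q := fun i => ((Q i 0%N).1, U i))) => [i | i _].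
    by case: (U_row i).
  case: (U_row i) => _ /= -> _ _; case: (Q_tour i K) => _ _ _ i_last.
  by case: (Q_tour i.+1 0%N) => _ _ i1_head _; apply: l1_dist_box_next_row i_last i1_head.
have u_tour : tour (sq_set A) ((Q 0%N 0%N).1 :: u).
  split => // _ [x xA ->].
  have xi : (x.1 %/ m <= K)%N by rewrite -ltnS ltn_divLR.
  have xl : (x.2 %/ m <= K)%N by rewrite -ltnS ltn_divLR.
  apply: (u_sub _ xi); case: (U_row (x.1 %/ m)%N) => _ _ /(_ _ xl) U_sub _; apply: U_sub.
  case: (Q_tour (x.1 %/ m) (x.2 %/ m)) => -[_ /=] -> //.
  by exists x; rewrite // !inE xA !eqxx.
apply: le_trans (lTS_le_tour R u_tour) _; rewrite ler_nat /Z2path_length /=.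
apply: leq_trans u_size _.
have : (\sum_(i < K.+1) size (U i) <=
        \sum_(i < K.+1) (\sum_(l < K.+1) size (Q i l).2 + K * (3 * m)))%N.
  by apply: leq_sum => i _; case: (U_row i).
rewrite big_split sum_nat_const card_ord /=.
move: (\sum_(i < K.+1) size (U i))%N => SU.
by move: (\sum_(i < K.+1) \sum_(l < K.+1) size (Q i l).2)%N => SQ; nia.
Qed.

End Chaining.

Lemma lTS_le_sum_blocks :
  lTS (sq_set A) <= \sum_(i < K.+1) \sum_(l < K.+1) lTS (sq_set (A :&: block K.+1 m i l))
                    + (6 * K.+1 * K.+1 * m)%N%:R :> R.
Proof.
have [Q Q_tour] : exists Q, forall i l, block_tour i l (Q i l).
  have [Q Q_tour] := choice (fun il : nat * nat => block_tour_exists il.1 il.2).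
  by exists (fun i l => Q (i, l)) => i l; apply: Q_tour (i, l).
apply: le_trans (lTS_le_block_tours Q_tour) _.
rewrite natrD natr_sum lerD2r; apply: ler_sum => i _; rewrite natr_sum.
by apply: ler_sum => l _; case: (Q_tour i l) => _ ->.
Qed.

End BlockTours.

Lemma le_div_sq_blocks (R : realFieldType) (X Y k m n : R) :
  1 <= k -> 0 < m -> k * m <= n -> 0 <= Y -> X <= (k + 1) ^+ 2 * Y ->
  X / n ^+ 2 <= (1 + 3 / k) * (Y / m ^+ 2).
Proof.
move=> k_ge1 m_gt0 km_n Y_ge0 XY.
have k_gt0 : 0 < k by lra.
have km_gt0 : 0 < k * m by rewrite mulr_gt0.
have n_gt0 : 0 < n by lra.
have kmn2 : (k * m) ^+ 2 <= n ^+ 2 by rewrite !expr2; apply: ler_pM => //; apply: ltW.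
rewrite ler_pdivrMr ?exprn_gt0 //; apply: le_trans XY _.
apply: le_trans (_ : (1 + 3 / k) * (Y / m ^+ 2) * (k * m) ^+ 2 <= _); last first.
  have : 0 <= 3 / k by rewrite divr_ge0 // ltW.
  have : 0 <= Y / m ^+ 2 by rewrite divr_ge0 // exprn_ge0 // ltW.
  by move=> *; rewrite ler_wpM2l //; apply: mulr_ge0; lra.
have -> : (1 + 3 / k) * (Y / m ^+ 2) * (k * m) ^+ 2 = (k + 3) * k * Y.
  by field; rewrite ?gt_eqF.
(* [(k + 1)^2 <= (k + 3) k] as soon as [k >= 1]. *)
nra.
Qed.

Section ExpectedTour.
Variables (R : realType) (p : R).
Hypotheses (p_ge0 : 0 <= p) (p_le1 : p <= 1).

Section SubSquare.
Variables (a b : nat) (h : 'I_a * 'I_a -> 'I_b * 'I_b) (t : Z2).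
Hypothesis h_inj : injective h.
Hypothesis h_translate : forall x, sq_emb (h x) = translate t (sq_emb x).

Lemma sq_set_imset (C : {set 'I_a * 'I_a}) : sq_set (h @: C) = translate t @` sq_set C.
Proof.
apply/seteqP; split => z.
  by move=> [_ /imsetP [x xC ->] ->]; exists (sq_emb x); [exists x | rewrite h_translate].
by move=> [_ [x xC ->] <-]; exists (h x); [apply: imset_f | rewrite h_translate].
Qed.

Lemma E_lTS_restrict :
  \sum_(A : {set 'I_b * 'I_b}) perc_prob p A * lTS (sq_set (A :&: h @: [set: _]%SET)) =
  E_lTS p a.
Proof.
set S := h @: [set: _]%SET.
rewrite (sum_perc_prob_restrict _ (S := S)); last first.
  by move=> A; rewrite -finset.setIA finset.setIid.
have imset_preim (B : {set _}) : B \subset S -> h @: (h @^-1: B) = B.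
  move=> BS; apply/setP => y; apply/imsetP/idP => [[x]|yB]; first by rewrite inE => ? ->.
  by have /imsetP [x _ yx] := fintype.subsetP BS y yB; exists x; rewrite // inE -yx.
rewrite /E_lTS (reindex_onto (fun C : {set _} => h @: C) _ imset_preim) /=.
apply: eq_big => [C|C _].
  by rewrite imsetS ?finset.subsetT //=; apply/eqP/setP => x; rewrite inE mem_imset.
rewrite (finset.setIidPl (imsetS h (finset.subsetT C))) sq_set_imset lTS_translate.
by rewrite /subset_weight /perc_prob !card_imset // cardsT card_prod card_ord.
Qed.

End SubSquare.

Lemma E_lTS_ge0 n : 0 <= E_lTS p n.
Proof.
by apply: sumr_ge0 => A _; rewrite mulr_ge0 ?perc_prob_ge0 ?lTS_ge0 //; apply: tour_sq_set.
Qed.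

Lemma E_lTS_ge n : p * (n * n)%:R - 1 <= E_lTS p n.
Proof.
rewrite -perc_prob_card -[X in _ - X](perc_prob_sum1 p n) -sumrB; apply: ler_sum => A _.
by rewrite -[X in _ - X]mulr1 -mulrBr ler_wpM2l ?perc_prob_ge0 ?lTS_sq_set_ge_card.
Qed.

Lemma E_lTS_mono a b : (a <= b)%N -> E_lTS p a <= E_lTS p b.
Proof.
move=> ab; pose h (x : 'I_a * 'I_a) := (widen_ord ab x.1, widen_ord ab x.2).
have h_inj : injective h by move=> [x1 x2] [y1 y2] [/val_inj -> /val_inj ->].
have h_translate x : sq_emb (h x) = translate (0, 0) (sq_emb x).
  by rewrite /translate /sq_emb /= !addr0.
rewrite -(E_lTS_restrict h_inj h_translate); apply: ler_sum => A _.
rewrite ler_wpM2l ?perc_prob_ge0 ?lTS_subset //; last exact: tour_sq_set.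
by move=> z [x]; rewrite inE => /andP[xA _] ->; exists x.
Qed.

Lemma E_lTS_block K m (i l : 'I_K) : (0 < m)%N ->
  \sum_A perc_prob p A * lTS (sq_set (A :&: block K m i l)) = E_lTS p m.
Proof.
move=> m_gt0; rewrite block_imset //.
by move: (E_lTS_restrict (@block_emb_inj K m i l) (block_emb_translate i l)).
Qed.

Lemma E_lTS_blocks K m : (0 < m)%N ->
  E_lTS p (K.+1 * m) <= K.+1%:R ^+ 2 * (E_lTS p m + 6 * m%:R).
Proof.
move=> m_gt0; apply: le_trans (_ : \sum_A perc_prob p A *
   (\sum_(i < K.+1) \sum_(l < K.+1) lTS (sq_set (A :&: block K.+1 m i l))
      + (6 * K.+1 * K.+1 * m)%N%:R) <= _).
  by apply: ler_sum => A _; rewrite ler_wpM2l ?perc_prob_ge0 ?lTS_le_sum_blocks.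
under eq_bigr do rewrite mulrDr.
rewrite big_split /= -mulr_suml perc_prob_sum1 mul1r mulrDr.
apply: lerD; last first.
  by rewrite [X in _ <= X](_ : _ = (6 * K.+1 * K.+1 * m)%N%:R) // !natrM; ring.
under eq_bigr do rewrite mulr_sumr; rewrite exchange_big /=.
under eq_bigr do (under eq_bigr do rewrite mulr_sumr; rewrite exchange_big /=).
under eq_bigr do (under eq_bigr do rewrite E_lTS_block //).
by rewrite !sumr_const !card_ord -mulrnA -natrX mulr_natl.
Qed.

Lemma E_lTS_ratio_ge n : (0 < n)%N -> p - 1 / n%:R ^+ 2 <= E_lTS p n / n%:R ^+ 2.
Proof.
move=> n_gt0; have n2_gt0 : 0 < n%:R ^+ 2 :> R by rewrite exprn_gt0 // ltr0n.
rewrite ler_pdivlMr // mulrBl div1r mulVf ?gt_eqF //.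
by have := E_lTS_ge n; rewrite natrM -expr2.
Qed.

Lemma E_lTS_ratio_le m n : (0 < m)%N -> (m <= n)%N ->
  E_lTS p n / n%:R ^+ 2 <=
  (1 + 3 / (n %/ m)%N%:R) * (E_lTS p m / m%:R ^+ 2 + 6 / m%:R).
Proof.
move=> m_gt0 mn; set k := (n %/ m)%N.
have k_gt0 : (0 < k)%N by rewrite divn_gt0.
have n_le : (n <= k.+1 * m)%N by rewrite ltnW // -ltn_divLR.
have m_gt0R : 0 < m%:R :> R by rewrite ltr0n.
have -> : E_lTS p m / m%:R ^+ 2 + 6 / m%:R = (E_lTS p m + 6 * m%:R) / m%:R ^+ 2.
  by field; rewrite gt_eqF.
apply: le_div_sq_blocks; rewrite ?ler1n ?addr_ge0 ?mulr_ge0 ?E_lTS_ge0 //.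
  by rewrite -natrM ler_nat leq_trunc_div.
by rewrite natr1; apply: le_trans (E_lTS_mono n_le) (E_lTS_blocks k m_gt0).
Qed.

End ExpectedTour.

Section BlockSubadditive.
Variables (R : realType) (u : nat -> R) (b c : R).
Hypotheses (u_ge0 : forall n, 0 <= u n) (b_ge0 : 0 <= b) (c_ge0 : 0 <= c).
Hypothesis u_le : forall m n, (0 < m)%N -> (m <= n)%N ->
  u n <= (1 + b / (n %/ m)%N%:R) * (u m + c / m%:R).

Let E := [set u m + c / m%:R | m in [set m : nat | (0 < m)%N]].

Let E_ge0 x : E x -> 0 <= x.
Proof. by move=> [m m_gt0 <-]; rewrite addr_ge0 ?divr_ge0. Qed.

Let has_inf_E : has_inf E.
Proof. by split; [exists (u 1%N + c / 1%:R), 1%N | exists 0 => x /E_ge0]. Qed.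

Let near_inf_le e : 0 < e -> \forall n \near \oo, inf E - e <= u n.
Proof.
move=> e_gt0; near=> n.
have n_gt0 : (0 < n)%N by near: n; apply: nbhs_infty_gt.
have n_gtR : 0 < n%:R :> R by rewrite ltr0n.
have : inf E <= u n + c / n%:R by apply: ge_inf; [exists 0 => x /E_ge0 | exists n].
have : c / n%:R <= e.
  rewrite ler_pdivrMr // -ler_pdivrMl // mulrC.
  by near: n; apply: nbhs_infty_ger.
lra.
Unshelve. all: by end_near.
Qed.

Let near_le_inf e : 0 < e -> \forall n \near \oo, u n <= inf E + e.
Proof.
move=> e_gt0; have e2_gt0 : 0 < e / 2 by rewrite divr_gt0.
have [_ [m m_gt0 <-] m_close] := inf_adherent e2_gt0 has_inf_E.
set g := u m + c / m%:R in m_close *; have g_ge0 : 0 <= g by apply: E_ge0; exists m.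
have [K _ K_large] := nbhs_infty_ger (b * g / (e / 2)).
near=> n.
have k_ge : (K <= n %/ m)%N by rewrite leq_divRL //; near: n; apply: nbhs_infty_ge.
have k_gtR : 0 < (n %/ m)%N%:R :> R.
  rewrite ltr0n divn_gt0 //; near: n; apply: nbhs_infty_ge.
have : b * g / (n %/ m)%N%:R <= e / 2.
  by rewrite ler_pdivrMr // -ler_pdivrMl // mulrC; apply: K_large.
have : u n <= (1 + b / (n %/ m)%N%:R) * g.
  by apply: u_le => //; near: n; apply: nbhs_infty_ge.
rewrite mulrDl mul1r mulrAC; lra.
Unshelve. all: by end_near.
Qed.

Lemma block_subadditive_cvg : u @ \oo --> inf E.
Proof.
apply/cvgrPdist_le => e e_gt0.
apply: filterS2 (near_inf_le e_gt0) (near_le_inf e_gt0) => n lo hi.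
by rewrite ler_norml; apply/andP; split; lra.
Qed.

End BlockSubadditive.

Theorem lemma2p3 (R : realType) (p : R) (hp0 : 0 < p) (hp1 : p < 1) :
  exists alpha : R, 0 < alpha /\
    (fun n : nat => E_lTS p n / (n%:R ^+ 2)) @ \oo --> alpha.
Proof.
have [p_ge0 p_le1] := (ltW hp0, ltW hp1).
pose a n := E_lTS p n / n%:R ^+ 2.
have a_ge0 n : 0 <= a n by rewrite divr_ge0 ?E_lTS_ge0 ?exprn_ge0.
have p_le m : (0 < m)%N -> p <= a m + 6 / m%:R.
  move=> m_gt0; have m_ge1 : 1 <= m%:R :> R by rewrite ler1n.
  have : 1 / m%:R ^+ 2 <= 6 / m%:R :> R.
    rewrite ler_pdivrMr ?exprn_gt0 ?ltr0n // expr2 mulrA divfK ?lt0r_neq0 ?ltr0n //.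
    lra.
  by have := E_lTS_ratio_ge p_ge0 p_le1 m_gt0; rewrite /a; lra.
exists (inf [set a m + 6 / m%:R | m in [set m : nat | (0 < m)%N]]); split.
  apply: lt_le_trans hp0 (lb_le_inf _ _); first by exists (a 1%N + 6 / 1%:R), 1%N.
  by move=> _ [m m_gt0 <-]; apply: p_le.
apply: (@block_subadditive_cvg _ a 3 6) => //.
exact: E_lTS_ratio_le.
Qed.
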